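(* Let $n\geq 3$ and let $R\cong\prod_{i=1}^n F_i$, where each $F_i$ is a finite field. Then $\operatorname{sdim}_M(\Gamma^c(R))=|Z^*(R)|-2^{n-1}+1$.
   Context: $Z^*(R)$ is the set of nonzero zero-divisors of $R$. $\Gamma^c(R)$ is the complement of the zero-divisor graph: vertex set $Z^*(R)$, distinct $x,y$ adjacent iff $xy\neq 0$. For a connected graph $G$, a vertex $w$ strongly resolves $u,v$ if some shortest $u$–$w$ path contains $v$ or some shortest $v$–$w$ path contains $u$; $\operatorname{sdim}_M(G)$ is the minimum size of a set $W$ such that every pair of distinct vertices is strongly resolved by some vertex of $W$. *)

From mathcomp Require Import all_boot all_order all_algebra.
Set Implicit Arguments. Unset Strict Implicit. Unset Printing Implicit Defensive.
Import GRing.Theory.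
Local Open Scope ring_scope.

(** * Generic simple graphs given by a vertex set V and an adjacency relation e
    on a finite ambient type T (only the restriction of e to V matters). *)
Section Graphs.
Variables (T : finType) (V : {set T}) (e : rel T).

(** [s] is (the tail of) a walk in the graph from [x] to [y]:
    x :: s is a sequence of vertices of V, consecutive ones adjacent. *)
Definition gwalk (x y : T) (s : seq T) : Prop :=
  [/\ all (fun z => z \in V) (x :: s), path e x s & last x s = y].

Definition shortest_path (x y : T) (s : seq T) : Prop :=
  gwalk x y s /\ forall s', gwalk x y s' -> (size s <= size s')%N.

Definition strongly_resolves (w u v : T) : Prop :=
  (exists s, shortest_path u w s /\ v \in u :: s) \/
  (exists s, shortest_path v w s /\ u \in v :: s).

Definition strong_resolving_set (W : {set T}) : Prop :=
  W \subset V /\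
  forall u v, u \in V -> v \in V -> u != v ->
    exists2 w, w \in W & strongly_resolves w u v.

Definition is_sdimM (k : nat) : Prop :=
  (exists2 W, strong_resolving_set W & #|W| = k) /\
  (forall W, strong_resolving_set W -> (k <= #|W|)%N).
End Graphs.

Definition zstar (R : finComNzRingType) : {set R} :=
  [set x : R | (x != 0) && [exists y : R, (y != 0) && (x * y == 0)]].

(** Adjacency of the complement of the zero-divisor graph Γ^c(R):
    distinct x, y with xy ≠ 0 (vertex set Z*(R)). *)
Definition gammac_adj (R : finComNzRingType) : rel R :=
  fun x y => (x != y) && (x * y != 0).

(* Under f, the support map x |-> {i | x_i != 0} sends products to
   intersections, so Z*(R) consists of the elements whose support is neither
   empty nor everything, and two of them are adjacent in the complement graph
   iff they are distinct with meeting supports.  As n >= 3, two elements with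
   disjoint supports through i and j are both adjacent to the idempotent with
   support {i, j}: the graph has diameter 2.  In such a graph a vertex w other
   than u, v strongly resolves them only along a path u - v - w (or v - u - w)
   with non-adjacent ends; hence any two vertices outside a strong resolving
   set have distinct intersecting supports, and there are at most
   2^(n-1) - 1 of them, the largest size of an intersecting family of proper
   subsets.  Conversely, let K be the 2^(n-1) - 1 idempotents whose support
   contains a fixed index i0 and is proper.  Then Z*(R) minus K is strongly
   resolving: two elements e_S, e_T of K with i in S but not in T are resolved
   by e_{i} along the shortest path e_T - e_S - e_{i}. *)

From mathcomp Require Import all_boot all_order all_algebra all_field.
From mathcomp Require Import zify.
From Stdlib Require Import FunctionalExtensionality.
Set Implicit Arguments.
Unset Strict Implicit.
Unset Printing Implicit Defensive.
Import GRing.Theory.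
Local Open Scope ring_scope.

Section DiameterTwo.
Variables (T : finType) (V : {set T}) (e : rel T).

Lemma gwalk_size_gt1 u w s :
  gwalk V e u w s -> u != w -> ~~ e u w -> (1 < size s)%N.
Proof.
case=> _ + l uw; case: s l => [|a [|b s]] //= l; first by rewrite l eqxx in uw.
by rewrite andbT l => ->.
Qed.

Lemma shortest_path_nil u : u \in V -> shortest_path V e u u [::].
Proof. by move=> uV; split=> //; split=> //=; rewrite uV. Qed.

Lemma shortest_path_edge u w :
  u \in V -> w \in V -> u != w -> e u w -> shortest_path V e u w [:: w].
Proof.
move=> uV wV uw euw; split; first by split; rewrite //= ?uV ?wV ?euw.
by case=> [|a s] // [_ _ /= l]; rewrite l eqxx in uw.
Qed.

Lemma shortest_path_two u v w :
  [/\ u \in V, v \in V & w \in V] -> u != w -> e u v -> e v w -> ~~ e u w ->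
  shortest_path V e u w [:: v; w].
Proof.
case=> uV vV wV uw euv evw neuw; split.
  by split; rewrite //= ?uV ?vV ?wV ?euv ?evw.
by move=> s /gwalk_size_gt1; apply.
Qed.

Lemma strongly_resolvesC w u v :
  strongly_resolves V e w u v <-> strongly_resolves V e w v u.
Proof. by split; case; [right | left | right | left]. Qed.

Hypothesis diam2 : forall u w, u \in V -> w \in V ->
  exists2 s, gwalk V e u w s & (size s <= 2)%N.

Lemma exists_shortest_path u w : u \in V -> w \in V ->
  exists s, shortest_path V e u w s.
Proof.
move=> uV wV; have [<-|uw] := eqVneq u w.
  by exists [::]; apply: shortest_path_nil.
have [euw|neuw] := boolP (e u w); first by exists [:: w]; apply: shortest_path_edge.
have [s ws s_le2] := diam2 uV wV; exists s; split=> // s' ws'.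
exact: leq_trans s_le2 (gwalk_size_gt1 ws' uw neuw).
Qed.

Lemma strongly_resolves_end u v : u \in V -> v \in V -> strongly_resolves V e v u v.
Proof.
move=> uV vV; have [s sp] := exists_shortest_path uV vV.
by left; exists s; split; last by case: sp => [[_ _ <-] _]; rewrite mem_last.
Qed.

Lemma shortest_path_inner u v w s :
  u \in V -> w \in V -> v != u -> v != w ->
  shortest_path V e u w s -> v \in u :: s -> [/\ e u v, e v w & ~~ e u w].
Proof.
move=> uV wV vu vw [ws smin]; rewrite inE (negbTE vu) /=.
have [s2 ws2 s2_le2] := diam2 uV wV; have := leq_trans (smin _ ws2) s2_le2.
case: s ws smin => [|a [|b [|//]]] [_ /= p l] smin _ //.
  by rewrite l mem_seq1 (negbTE vw).
move: p; rewrite andbT l !inE (negbTE vw) orbF => /andP [eua eaw] /eqP va; subst a.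
split=> //; apply/negP=> euw.
suff /smin : gwalk V e u w [:: w] by [].
by split; rewrite //= ?uV ?wV ?euw.
Qed.

Lemma strongly_resolves_inner w u v :
  u \in V -> v \in V -> w \in V -> u != v -> w != u -> w != v ->
  strongly_resolves V e w u v ->
  [/\ e u v, e v w & ~~ e u w] \/ [/\ e v u, e u w & ~~ e v w].
Proof.
move=> uV vV wV uv wu wv [[s [sp vs]]|[s [sp us]]]; [left | right].
  by apply: shortest_path_inner sp vs; rewrite // eq_sym.
by apply: shortest_path_inner sp us; rewrite // eq_sym.
Qed.
End DiameterTwo.

Section IntersectingFamilies.
Variable T : finType.

Lemma card_set_of : #|{set T}| = (2 ^ #|T|)%N.
Proof. by rewrite -cardsT -card_powerset powersetT cardsT. Qed.

Lemma card_intersecting (G : {set {set T}}) :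
  {in G &, forall A B, A :&: B != set0} -> (2 * #|G| <= 2 ^ #|T|)%N.
Proof.
move=> meetG; set C := [set ~: A | A in G].
have cardC : #|C| = #|G| by apply/card_imset/setC_inj.
have GC0 : G :&: C = set0.
  apply/setP=> A; rewrite !inE; apply/andP=> -[AG /imsetP [B BG defA]].
  by have := meetG _ _ AG BG; rewrite defA setIC setICr eqxx.
have := cardsUI G C; rewrite GC0 cards0 addn0 cardC -card_set_of mul2n -addnn => <-.
exact: max_card.
Qed.

Lemma card_intersecting_proper (G : {set {set T}}) :
  (0 < #|T|)%N -> {in G &, forall A B, A :&: B != set0} -> setT \notin G ->
  (#|G|.+1 <= 2 ^ #|T|.-1)%N.
Proof.
move=> T_gt0 meetG TnG.
have G_neq0 A : A \in G -> A != set0 by move=> AG; rewrite -[A]setIid meetG.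
have T_neq0 : [set: T] != set0 by rewrite -card_gt0 cardsT.
have meetTG : {in setT |: G &, forall A B, A :&: B != set0}.
  move=> A B; rewrite !inE => /predU1P [->|AG] /predU1P [->|BG];
    rewrite ?setTI ?setIT ?meetG //; exact: G_neq0.
have := card_intersecting meetTG.
by rewrite cardsU1 TnG -(prednK T_gt0) expnS leq_pmul2l.
Qed.

Lemma card_sets_mem (x : T) : #|[set A : {set T} | x \in A]| = (2 ^ #|T|.-1)%N.
Proof.
have notin_sub (B : {set T}) : B \subset [set~ x] -> x \notin B.
  by move/subsetP=> sB; apply/negP=> /sB; rewrite !inE eqxx.
have -> : [set A : {set T} | x \in A] = [set x |: B | B in powerset [set~ x]].
  apply/setP=> A; rewrite inE; apply/idP/imsetP=> [xA|[B _ ->]]; last exact: setU11.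
  by exists (A :\ x); rewrite ?setD1K // inE setDE subsetIr.
rewrite card_in_imset ?card_powerset ?cardsC1 // => B C.
rewrite !inE => /notin_sub nB /notin_sub nC eqBC.
by rewrite -(setU1K nB) eqBC setU1K.
Qed.
End IntersectingFamilies.

Section ProductOfFields.
Variables (n : nat) (R : finComNzRingType) (F : 'I_n -> finFieldType).
Variables (f : R -> forall i, F i) (g : (forall i, F i) -> R).
Hypotheses (fK : cancel f g) (gK : cancel g f).
Hypothesis f_add : forall x y i, f (x + y) i = f x i + f y i.
Hypothesis f_mul : forall x y i, f (x * y) i = f x i * f y i.

Definition supp (x : R) : {set 'I_n} := [set i | f x i != 0].

Lemma f0 i : f 0 i = 0.
Proof. by apply: (addrI (f 0 i)); rewrite -f_add !addr0. Qed.

Lemma supp_eq0 x : (supp x == set0) = (x == 0).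
Proof.
apply/eqP/eqP=> [supp0|->]; last by apply/setP=> i; rewrite !inE f0 eqxx.
rewrite -[x]fK -[0]fK; congr g; apply: functional_extensionality_dep => i.
by apply/eqP; move/setP/(_ i): supp0; rewrite !inE f0 => /negbFE.
Qed.

Lemma suppM x y : supp (x * y) = supp x :&: supp y.
Proof. by apply/setP=> i; rewrite !inE f_mul mulf_eq0 negb_or. Qed.

Definition idem (S : {set 'I_n}) : R := g (fun i => if i \in S then 1 else 0).

Lemma supp_idem S : supp (idem S) = S.
Proof. by apply/setP=> i; rewrite inE gK; case: (i \in S); rewrite ?oner_eq0 ?eqxx. Qed.

Lemma idem_inj : injective idem.
Proof. exact: can_inj supp_idem. Qed.

Local Notation V := (zstar R).
Local Notation e := (@gammac_adj R).

Lemma zstarE x : (x \in V) = (supp x != set0) && (supp x != setT).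
Proof.
rewrite inE supp_eq0; apply: andb_id2l => _.
apply/existsP/idP=> [[y /andP [y0 /eqP xy0]]|].
  apply: contraNneq y0 => xT.
  by rewrite -supp_eq0 -(setTI (supp y)) -xT -suppM xy0 supp_eq0.
rewrite -properT => /properP [_ [j _ jx]]; exists (idem [set j]).
rewrite -!supp_eq0 suppM supp_idem; apply/andP; split.
  by apply/set0Pn; exists j; rewrite inE.
apply/eqP/setP=> i; rewrite in_setI in_set1 in_set0.
by case: eqP => [->|]; rewrite ?andbF ?andbT ?(negbTE jx).
Qed.

Lemma gammac_adjE x y : e x y = (x != y) && (supp x :&: supp y != set0).
Proof. by rewrite /gammac_adj -suppM supp_eq0. Qed.

Lemma gammac_adjI x y i : x != y -> i \in supp x -> i \in supp y -> e x y.
Proof.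
by move=> xy ix iy; rewrite gammac_adjE xy; apply/set0Pn; exists i; rewrite inE ix.
Qed.

Lemma supp_neq x y i : i \in supp x -> i \notin supp y -> x != y.
Proof. by move=> ix; apply: contraNneq => <-. Qed.

Lemma idem_zstar S : (idem S \in V) = (S != set0) && (S != setT).
Proof. by rewrite zstarE supp_idem. Qed.

Hypothesis n_gt2 : (2 < n)%N.

Lemma gammac_diam2 u w : u \in V -> w \in V ->
  exists2 s, gwalk V e u w s & (size s <= 2)%N.
Proof.
move=> uV wV; have [<-|uw] := eqVneq u w; first by exists [::]; split; rewrite //= uV.
have [euw|] := boolP (e u w); first by exists [:: w]; split; rewrite //= ?uV ?wV ?euw.
rewrite gammac_adjE uw /= negbK => /eqP disj.
have [[i iu] [j jw]] : (exists i, i \in supp u) /\ (exists j, j \in supp w).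
  by move: uV wV; rewrite !zstarE => /andP [/set0Pn ? _] /andP [/set0Pn ? _].
have ju : j \notin supp u by apply/negP=> ju; move/setP/(_ j): disj; rewrite inE ju jw inE.
have iw : i \notin supp w by apply/negP=> iw; move/setP/(_ i): disj; rewrite inE iu iw inE.
set z := idem [set i; j]; have [iz jz] : i \in supp z /\ j \in supp z.
  by rewrite supp_idem !inE !eqxx orbT.
have zV : z \in V.
  rewrite idem_zstar; apply/andP; split; first by apply/set0Pn; exists i; rewrite !inE eqxx.
  apply: contraTneq n_gt2 => ijT.
  by rewrite -leqNgt -[n]card_ord -cardsT -ijT cards2 ltnS leq_b1.
exists [:: z; w] => //; split; rewrite //= ?uV ?zV ?wV //.
rewrite (gammac_adjI _ iu iz) ?(gammac_adjI _ jz jw) ?(supp_neq iz iw) //.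
by rewrite eq_sym (supp_neq jz ju).
Qed.

Lemma strongly_resolved_supp u v w :
  u \in V -> v \in V -> w \in V -> u != v -> w != u -> w != v ->
  strongly_resolves V e w u v -> supp u :&: supp v != set0 /\ supp u != supp v.
Proof.
move=> uV vV wV uv wu wv /(strongly_resolves_inner gammac_diam2 uV vV wV uv wu wv).
have key a b : a != w -> e a b -> e b w -> ~~ e a w ->
    supp a :&: supp b != set0 /\ supp a != supp b.
  move=> aw; rewrite !gammac_adjE aw /= negbK => /andP [_ ab] /andP [_ bw] /eqP aw0.
  by split=> //; apply: contraNneq bw => <-; rewrite aw0.
case=> [[euv evw neuw]|[evu euw nevw]]; first by apply: (key u v); rewrite // eq_sym.
by rewrite setIC (eq_sym (supp u)); apply: (key v u); rewrite // eq_sym.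
Qed.

Lemma card_strong_resolving_compl W :
  strong_resolving_set V e W -> (#|V :\: W|.+1 <= 2 ^ n.-1)%N.
Proof.
case=> /subsetP sWV resW; set U := V :\: W.
have sepU : {in U &, forall u v,
    u != v -> supp u :&: supp v != set0 /\ supp u != supp v}.
  move=> u v; rewrite !in_setD => /andP [uW uV] /andP [vW vV] uv.
  have [w wW res] := resW u v uV vV uv.
  apply: strongly_resolved_supp res; rewrite ?(sWV w) //.
  - by apply: contraNneq uW => <-.
  - by apply: contraNneq vW => <-.
have suppU_inj : {in U &, injective supp}.
  move=> u v uU vU eq_uv; apply/eqP; apply: contraT => uv.
  by case: (sepU u v uU vU uv); rewrite eq_uv eqxx.
have UV u : u \in U -> u \in V by rewrite in_setD => /andP [].
rewrite -(card_in_imset suppU_inj).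
have := @card_intersecting_proper _ (supp @: U); rewrite card_ord; apply.
- exact: ltnW (ltnW n_gt2).
- move=> _ _ /imsetP [u uU ->] /imsetP [v vU ->].
  have [<-|uv] := eqVneq u v; last by case: (sepU u v uU vU uv).
  by move: (UV u uU); rewrite zstarE setIid => /andP [].
- by apply/imsetP=> -[u /UV]; rewrite zstarE => /andP [_ /eqP uT] /esym.
Qed.

Section Pointed.
Variable i0 : 'I_n.

Definition pointed_sets := [set S : {set 'I_n} | (i0 \in S) && (S != setT)].
Definition pointed_idems := idem @: pointed_sets.

Lemma card_pointed_idems : #|pointed_idems| = (2 ^ n.-1 - 1)%N.
Proof.
rewrite card_imset; last exact: idem_inj.
have -> : pointed_sets = [set S : {set _} | i0 \in S] :\ setT.
  by apply/setP=> S; rewrite !inE andbC.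
have := cardsD1 setT [set S : {set 'I_n} | i0 \in S].
by rewrite inE in_setT card_sets_mem card_ord add1n => ->; rewrite subn1.
Qed.

Lemma pointed_idems_sub : pointed_idems \subset V.
Proof.
apply/subsetP=> _ /imsetP [S + ->]; rewrite inE idem_zstar => /andP [i0S ->].
by rewrite andbT; apply/set0Pn; exists i0.
Qed.

Lemma idem1_notin_pointed j : j != i0 -> idem [set j] \in V :\: pointed_idems.
Proof.
move=> ji0; rewrite in_setD idem_zstar; apply/and3P; split.
- apply/imsetP=> -[S]; rewrite inE => /andP [i0S _] /idem_inj jS.
  by move: i0S; rewrite -jS inE eq_sym (negbTE ji0).
- by apply/set0Pn; exists j; rewrite inE.
- by apply: contra_neq ji0 => jT; move: (in_setT i0); rewrite -jT inE => /eqP.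
Qed.

Lemma card_zstar_ge : (2 ^ n.-1 <= #|V|)%N.
Proof.
have [j] : exists j, j \in [set~ i0].
  by apply/set0Pn; rewrite -card_gt0 cardsC1 card_ord -ltnS (ltn_predK n_gt2) ltnW.
rewrite !inE => /idem1_notin_pointed /setDP [jV jK].
have : (#|pointed_idems| < #|V|)%N.
  by apply/proper_card/properP; split; [exact: pointed_idems_sub | exists (idem [set j])].
by rewrite card_pointed_idems; have := expn_gt0 2 n.-1; lia.
Qed.

Lemma strongly_resolves_pointed S S' i :
  S \in pointed_sets -> S' \in pointed_sets -> i \in S -> i \notin S' ->
  strongly_resolves V e (idem [set i]) (idem S) (idem S').
Proof.
move=> SP S'P iS iS'.
have [uV vV] : idem S \in V /\ idem S' \in V.
  by split; apply: (subsetP pointed_idems_sub); apply: imset_f.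
move: SP S'P; rewrite !inE => /andP [i0S _] /andP [i0S' _].
have ii0 : i != i0 by apply: contraNneq iS' => ->.
have /setDP [wV _] := idem1_notin_pointed ii0.
right; exists [:: idem S; idem [set i]]; split; last by rewrite !inE eqxx orbT.
apply: shortest_path_two; first by split.
- by rewrite eq_sym; apply: (@supp_neq _ _ i); rewrite supp_idem ?inE.
- apply: (@gammac_adjI _ _ i0); rewrite ?supp_idem // eq_sym.
  by apply: (@supp_neq _ _ i); rewrite supp_idem.
- apply: (@gammac_adjI _ _ i); rewrite ?supp_idem ?inE //.
  by apply: (@supp_neq _ _ i0); rewrite !supp_idem ?inE // eq_sym.
- rewrite gammac_adjE negb_and !negbK !supp_idem; apply/orP; right.
  apply/eqP/setP=> k; rewrite !inE.
  by case: eqP => [->|]; rewrite ?andbF ?andbT ?(negbTE iS').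
Qed.

Lemma strong_resolving_pointed : strong_resolving_set V e (V :\: pointed_idems).
Proof.
split=> [|u v uV vV uv]; first exact: subsetDl.
have [uK|uK] := boolP (u \in pointed_idems); last first.
  exists u; first by rewrite in_setD uK.
  exact/strongly_resolvesC/(strongly_resolves_end gammac_diam2).
have [vK|vK] := boolP (v \in pointed_idems); last first.
  by exists v; [rewrite in_setD vK | exact: (strongly_resolves_end gammac_diam2)].
case/imsetP: uK uv => S SP ->; case/imsetP: vK => S' S'P -> SS'.
have : ~~ (S \subset S') || ~~ (S' \subset S).
  by rewrite -negb_and -eqEsubset; apply: contraNneq SS' => ->.
have outside T j :
    T \in pointed_sets -> j \notin T -> idem [set j] \in V :\: pointed_idems.
  by rewrite inE => /andP [i0T _] jT; apply: idem1_notin_pointed; apply: contraNneq jT => ->.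
case/orP=> /subsetPn [i iS iS']; exists (idem [set i]).
- exact: outside S'P iS'.
- exact: strongly_resolves_pointed.
- exact: outside SP iS'.
- exact/strongly_resolvesC/strongly_resolves_pointed.
Qed.
End Pointed.

Lemma sdimM_gammac : is_sdimM V e (#|V| - 2 ^ n.-1 + 1).
Proof.
pose i0 : 'I_n := Ordinal (ltnW (ltnW n_gt2)).
have := card_zstar_ge i0; split.
  exists (V :\: pointed_idems i0); first exact: strong_resolving_pointed.
  by rewrite cardsDS ?pointed_idems_sub // card_pointed_idems; lia.
move=> W resW; have := card_strong_resolving_compl resW.
by case: resW => sWV _; rewrite cardsDS //; lia.
Qed.
End ProductOfFields.

Theorem theorem4p11 (n : nat) (R : finComNzRingType)
  (F : 'I_n -> finFieldType) (f : R -> forall i : 'I_n, F i) :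
  (3 <= n)%N ->
  bijective f ->
  (forall x y i, f (x + y) i = f x i + f y i) ->
  (forall x y i, f (x * y) i = f x i * f y i) ->
  (forall i, f 1 i = 1) ->
  is_sdimM (zstar R) (@gammac_adj R) (#|zstar R| - 2 ^ n.-1 + 1)%N.
Proof.
move=> n_gt2 [g fK gK] f_add f_mul _.
exact: sdimM_gammac fK gK f_add f_mul n_gt2.
Qed.
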